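(* Let $S$ be a right loop, $\nu:S\to S/\mathcal Z(S)$ the natural projection, and $\theta:G_S\to G_{S/\mathcal Z(S)}$ the induced surjective group homomorphism $f^S(y,z)\mapsto f^{S/\mathcal Z(S)}(\nu(y),\nu(z))$. Then $\ker\theta$ is isomorphic to a subgroup of the abelian group $\prod_{\mathcal A}\mathcal Z(S)$ for some index set $\mathcal A$ (one may take $\mathcal A$ to be a set of representatives of the cosets $\mathcal Z(S)\circ x$ other than $\mathcal Z(S)$).
   Context: A right loop is a set $S$ with binary operation $\circ$ and two-sided identity $1$ such that each equation $X\circ a=b$ has a unique solution. For $y,z\in S$, $f^S(y,z):S\to S$ sends $x$ to the unique $X$ with $X\circ(y\circ z)=(x\circ y)\circ z$; $G_S\le\mathrm{Sym}(S)$ is generated by all $f^S(y,z)$. A congruence on $S$ is an equivalence relation which is a right subloop of $S\times S$; an invariant right subloop is the class $T$ of $1$ under a congruence, $S/T=\{T\circ x\}$ with $(T\circ x)\circ(T\circ y)=T\circ(x\circ y)$. Centralizing: for congruences $\beta,\gamma$, $\gamma$ centralizes $\beta$ if there is a congruence $(\gamma|\beta)$ on the right loop $\beta\subseteq S\times S$ with: (i) $(x,y)(\gamma|\beta)(u,v)\Rightarrow x\gamma u$; (ii) for $(x,y)\in\beta$, $(u,v)\mapsto u$ is a bijection from the $(\gamma|\beta)$-class of $(x,y)$ to the $\gamma$-class of $x$; (iii) $(x,y)\in\gamma\Rightarrow(x,x)(\gamma|\beta)(y,y)$; (iv) $(x,y)(\gamma|\beta)(u,v)\Rightarrow(y,x)(\gamma|\beta)(v,u)$;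 (v) $(x,y)(\gamma|\beta)(u,v)$, $(y,z)(\gamma|\beta)(v,w)\Rightarrow(x,z)(\gamma|\beta)(u,w)$. The center congruence $\zeta(S)$ is the unique maximal congruence centralized by $S\times S$; the center $\mathcal Z(S)$ is its class of $1$, an invariant right subloop which is an abelian group under $\circ$. *)

From Stdlib Require Import Classical ClassicalEpsilon FunctionalExtensionality.

Set Implicit Arguments.

Record rloop := RLoop {
  car :> Type;
  rop : car -> car -> car;
  rone : car;
  rone_l : forall x, rop rone x = x;
  rone_r : forall x, rop x rone = x;
  rsolve : forall a b, exists! X, rop X a = b
}.

Arguments rop {r} _ _.
Arguments rone {r}.

Definition rdiv (L : rloop) (b a : L) : L :=
  proj1_sig (constructive_indefinite_description _
    (match rsolve L a b with ex_intro _ x (conj H _) => ex_intro _ x H end)).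

Arguments rdiv {L} b a.

Lemma rdivP (L : rloop) (b a : L) : rop (rdiv b a) a = b.
Proof. unfold rdiv. destruct (constructive_indefinite_description _ _); auto. Qed.

Definition fmap {L : rloop} (y z : L) : L -> L :=
  fun x => rdiv (rop (rop x y) z) (rop y z).

Inductive inG (L : rloop) : (L -> L) -> Prop :=
| inG_id : inG L (fun x => x)
| inG_gen : forall y z, inG L (fmap y z)
| inG_comp : forall g h, inG L g -> inG L h -> inG L (fun x => g (h x))
| inG_inv : forall g h, inG L g -> (forall x, h (g x) = x) ->
                        (forall x, g (h x) = x) -> inG L h.

(* Congruence: an equivalence relation which is a right subloop of L x L
   (contains (1,1) by reflexivity, closed under o and right division). *)
Definition congruence {L : rloop} (R : L -> L -> Prop) : Prop :=
  (forall x, R x x) /\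
  (forall x y, R x y -> R y x) /\
  (forall x y z, R x y -> R y z -> R x z) /\
  (forall a b c d, R a b -> R c d -> R (rop a c) (rop b d)) /\
  (forall a b c d, R a b -> R c d -> R (rdiv c a) (rdiv d b)).

(* A congruence on the right loop beta (a subloop of L x L, operations
   componentwise), given as a relation on pairs supported in beta. *)
Definition congruence_on {L : rloop} (beta : L -> L -> Prop)
    (T : L * L -> L * L -> Prop) : Prop :=
  (forall p q, T p q -> beta (fst p) (snd p) /\ beta (fst q) (snd q)) /\
  (forall p, beta (fst p) (snd p) -> T p p) /\
  (forall p q, T p q -> T q p) /\
  (forall p q r, T p q -> T q r -> T p r) /\
  (forall p q p' q', T p q -> T p' q' ->
      T (rop (fst p) (fst p'), rop (snd p) (snd p'))
        (rop (fst q) (fst q'), rop (snd q) (snd q'))) /\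
  (forall p q p' q', T p q -> T p' q' ->
      T (rdiv (fst p') (fst p), rdiv (snd p') (snd p))
        (rdiv (fst q') (fst q), rdiv (snd q') (snd q))).

Definition centralizes {L : rloop} (gamma beta : L -> L -> Prop) : Prop :=
  exists T : L * L -> L * L -> Prop,
    congruence_on beta T /\
    (forall x y u v, T (x, y) (u, v) -> gamma x u) /\
    (* (ii) (u,v) |-> u is a bijection from the T-class of (x,y) onto the
       gamma-class of x *)
    (forall x y, beta x y ->
       (forall u v v', T (x, y) (u, v) -> T (x, y) (u, v') -> v = v') /\
       (forall u, gamma x u -> exists v, T (x, y) (u, v))) /\
    (forall x y, gamma x y -> T (x, x) (y, y)) /\
    (forall x y u v, T (x, y) (u, v) -> T (y, x) (v, u)) /\
    (forall x y z u v w, T (x, y) (u, v) -> T (y, z) (v, w) -> T (x, z) (u, w)).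

Definition total_rel (L : rloop) : L -> L -> Prop := fun _ _ => True.

Definition is_center_congruence {L : rloop} (zeta : L -> L -> Prop) : Prop :=
  congruence zeta /\ centralizes (@total_rel L) zeta /\
  (forall beta, congruence beta -> centralizes (@total_rel L) beta ->
     forall x y, beta x y -> zeta x y).

Definition center {L : rloop} (zeta : L -> L -> Prop) : L -> Prop :=
  fun z => zeta rone z.

Definition induced_hom {S Q : rloop} (nu : S -> Q) (theta : (S -> S) -> (Q -> Q))
  : Prop :=
  (forall g, inG S g -> inG Q (theta g)) /\
  (forall g h, inG S g -> inG S h ->
     theta (fun x => g (h x)) = (fun x => theta g (theta h x))) /\
  (forall y z, theta (fmap y z) = fmap (nu y) (nu z)).

Definition in_ker {S Q : rloop} (theta : (S -> S) -> (Q -> Q)) (g : S -> S)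
  : Prop := inG S g /\ theta g = (fun x => x).

From Stdlib Require Import Classical ClassicalEpsilon FunctionalExtensionality.

(* Choosing a section of nu we get
      theta g := nu o g o sec; it is an induced homomorphism onto G_Q, and
      every induced homomorphism satisfies nu (g x) = theta g (nu x).
   3. The centralizing congruence of S x S over zeta shows that each c in
      Z(S) is central: c commutes with every u and (c o u) o w = c o (u o w).
      Consequently every element of G_S commutes with left multiplication by c.
   4. For g in ker theta, g x lies in the zeta-class of x, so g x = c_x o x
      with c_x := g x / x in Z(S).  The map g |-> (x |-> g x / x) is
      injective, and by step 3 it turns composition into pointwise product:
      ker theta embeds into the direct power of Z(S) indexed by S. *)

Lemma rdiv_unique (L : rloop) (a b X : L) : rop X a = b -> X = rdiv b a.
Proof.
  intro H. destruct (rsolve L a b) as [x [_ Hu]].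
  rewrite <- (Hu X H). apply Hu, rdivP.
Qed.

Lemma rdiv_mul (L : rloop) (x a : L) : rdiv (rop x a) a = x.
Proof. symmetry; apply rdiv_unique; reflexivity. Qed.

Lemma rcancel (L : rloop) (x x' a : L) : rop x a = rop x' a -> x = x'.
Proof. intro H. rewrite <- (rdiv_mul _ x a), H. apply rdiv_mul. Qed.

Lemma rdiv_self (L : rloop) (a : L) : rdiv a a = rone.
Proof. symmetry; apply rdiv_unique, rone_l. Qed.

Lemma inG_inj (L : rloop) (g : L -> L) :
  inG L g -> forall x y, g x = g y -> x = y.
Proof.
  induction 1 as [| y z | g h _ IHg _ IHh | g h _ IHg Hhg Hgh]; intros a b E; auto.
  - unfold fmap in E. apply (f_equal (fun t => rop t (rop y z))) in E.
    rewrite !rdivP in E. exact (rcancel _ _ _ _ (rcancel _ _ _ _ E)).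
  - rewrite <- (Hgh a), <- (Hgh b), E. reflexivity.
Qed.

Definition fmap_inv {L : rloop} (y z : L) : L -> L :=
  fun x => rdiv (rdiv (rop x (rop y z)) z) y.

Lemma fmap_inverse (L : rloop) (y z : L) :
  (forall x, fmap_inv y z (fmap y z x) = x) /\ (forall x, fmap y z (fmap_inv y z x) = x).
Proof.
  split; intro x; unfold fmap, fmap_inv.
  - rewrite rdivP, !rdiv_mul. reflexivity.
  - rewrite !rdivP, rdiv_mul. reflexivity.
Qed.

Lemma inG_bij (L : rloop) (g : L -> L) : inG L g ->
  exists g', inG L g' /\ (forall x, g' (g x) = x) /\ (forall x, g (g' x) = x).
Proof.
  induction 1 as [| y z | g h _ [g' [G1 [G2 G3]]] _ [h' [H1 [H2 H3]]]
                 | g h Hg _ Hhg Hgh].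
  - exists (fun x => x). repeat split; auto. constructor.
  - destruct (fmap_inverse _ y z) as [E1 E2].
    exists (fmap_inv y z). split; [| split; [exact E1 | exact E2]].
    exact (inG_inv _ (inG_gen L y z) E1 E2).
  - exists (fun x => h' (g' x)). repeat split.
    + constructor; auto.
    + intro x. rewrite G2, H2. reflexivity.
    + intro x. rewrite H3, G3. reflexivity.
  - exists g. repeat split; auto.
Qed.

Section InducedHom.
Variables (S Q : rloop) (nu : S -> Q).
Hypothesis nu_mul : forall x y, nu (rop x y) = rop (nu x) (nu y).

Lemma nu_rdiv (b a : S) : nu (rdiv b a) = rdiv (nu b) (nu a).
Proof. apply rdiv_unique. rewrite <- nu_mul, rdivP. reflexivity. Qed.

Lemma nu_fmap (y z x : S) : nu (fmap y z x) = fmap (nu y) (nu z) (nu x).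
Proof. unfold fmap. rewrite nu_rdiv, !nu_mul. reflexivity. Qed.

(* An induced homomorphism fixes the identity, since theta id is an
   injective idempotent. *)
Lemma induced_hom_id (theta : (S -> S) -> Q -> Q) :
  induced_hom nu theta -> theta (fun x => x) = (fun x => x).
Proof.
  intros [Tin [Tcomp _]].
  assert (I : inG S (fun x : S => x)) by constructor.
  pose proof (Tcomp _ _ I I) as E.
  extensionality q. apply (inG_inj _ _ (Tin _ I)).
  symmetry; exact (f_equal (fun f => f q) E).
Qed.

Lemma induced_hom_compat (theta : (S -> S) -> Q -> Q) :
  induced_hom nu theta ->
  forall g, inG S g -> forall x, nu (g x) = theta g (nu x).
Proof.
  intros Hth. pose proof (induced_hom_id theta Hth) as Tid.
  destruct Hth as [_ [Tcomp Tgen]].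
  induction 1 as [| y z | g h Hg IHg Hh IHh | g h Hg IHg Hhg Hgh]; intro x.
  - rewrite Tid; reflexivity.
  - rewrite Tgen. apply nu_fmap.
  - rewrite (Tcomp _ _ Hg Hh), IHg, IHh. reflexivity.
  - assert (Hh : inG S h) by (apply inG_inv with (g := g); auto).
    assert (E : theta (fun x => h (g x)) = theta (fun x => x))
      by (f_equal; extensionality t; auto).
    rewrite (Tcomp _ _ Hh Hg), Tid in E.
    rewrite <- (f_equal (fun f => f (nu (h x))) E), <- IHg, Hgh. reflexivity.
Qed.

(* Existence: given a section of nu, transport g along nu. *)
Variable sec : Q -> S.
Hypothesis sec_nu : forall q, nu (sec q) = q.

Definition transport (g : S -> S) : Q -> Q := fun q => nu (g (sec q)).

Lemma transport_fmap (y z : S) : transport (fmap y z) = fmap (nu y) (nu z).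
Proof. extensionality q. unfold transport. rewrite nu_fmap, sec_nu. reflexivity. Qed.

Lemma transport_id : transport (fun x => x) = (fun x => x).
Proof. extensionality q. apply sec_nu. Qed.

Lemma transport_comp (g h : S -> S) :
  (forall x, nu (g x) = transport g (nu x)) ->
  transport (fun x => g (h x)) = (fun q => transport g (transport h q)).
Proof. intro Hg. extensionality q. unfold transport at 1. apply Hg. Qed.

(* Transport lands in G_Q and is compatible with nu; both facts are needed
   together in the inverse case of the induction. *)
Lemma transport_inG (g : S -> S) : inG S g ->
  inG Q (transport g) /\ forall x, nu (g x) = transport g (nu x).
Proof.
  induction 1 as [| y z | g h _ [A1 B1] _ [A2 B2] | g h _ [A1 B1] Hhg Hgh].
  - rewrite transport_id. split; [constructor | auto].
  - rewrite transport_fmap. split; [constructor | intro x; apply nu_fmap].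
  - rewrite (transport_comp _ h B1). split; [constructor; auto |].
    intro x. rewrite B1, B2. reflexivity.
  - assert (Bh : forall x, nu (h x) = transport h (nu x)).
    { intro x. unfold transport. apply (inG_inj _ _ A1).
      rewrite <- !B1, !Hgh, sec_nu. reflexivity. }
    split; [| exact Bh].
    apply inG_inv with (g := transport g); auto; intro q; unfold transport at 2.
    + rewrite <- Bh, Hhg, sec_nu. reflexivity.
    + rewrite <- B1, Hgh, sec_nu. reflexivity.
Qed.

Lemma transport_hom : induced_hom nu transport.
Proof.
  split; [| split].
  - intros g Hg. apply (transport_inG g Hg).
  - intros g h Hg _. apply transport_comp, (transport_inG g Hg).
  - apply transport_fmap.
Qed.

Lemma transport_surj (k : Q -> Q) :
  inG Q k -> exists g, inG S g /\ transport g = k.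
Proof.
  induction 1 as [| y z | g h _ [g1 [A1 B1]] _ [h1 [A2 B2]]
                 | g h _ [g1 [A1 B1]] Hhg Hgh].
  - exists (fun x => x). split; [constructor | apply transport_id].
  - exists (fmap (sec y) (sec z)). split; [constructor |].
    rewrite transport_fmap, !sec_nu. reflexivity.
  - exists (fun x => g1 (h1 x)). split; [constructor; auto |].
    rewrite transport_comp by apply (transport_inG _ A1). subst; reflexivity.
  - destruct (inG_bij _ _ A1) as [g' [C1 [C2 _]]].
    exists g'. split; auto.
    assert (E : transport (fun x => g' (g1 x)) = transport (fun x => x))
      by (f_equal; extensionality t; auto).
    rewrite transport_id, transport_comp, B1 in E by apply (transport_inG _ C1).
    extensionality q. rewrite <- (Hgh q) at 1.
    exact (f_equal (fun f => f (h q)) E).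
Qed.
End InducedHom.

Definition central {L : rloop} (c : L) : Prop :=
  (forall u, rop c u = rop u c) /\
  (forall u w, rop (rop c u) w = rop c (rop u w)).

(* Elements of the center Z(S) are central: compare, inside the
   centralizing congruence T, the images of (1, c) under products with
   diagonal pairs, using that T-classes are graphs over the first factor. *)
Lemma center_central (S : rloop) (zeta : S -> S -> Prop) (c : S) :
  is_center_congruence zeta -> center zeta c -> central c.
Proof.
  intros [_ [[T [[_ [Trefl [_ [_ [Tmul _]]]]] [_ [Tgraph [Tdiag _]]]]] _]] Hc.
  assert (Tuniq : forall u v v', T (rone, c) (u, v) -> T (rone, c) (u, v') -> v = v')
    by exact (proj1 (Tgraph _ _ Hc)).
  assert (D : forall x y : S, T (x, x) (y, y)) by (intros; apply Tdiag; exact I).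
  assert (R1c : T (rone, c) (rone, c)) by exact (Trefl (rone, c) Hc).
  assert (Shift : forall u, T (rone, c) (u, rop c u)).
  { intro u. pose proof (Tmul _ _ _ _ R1c (D rone u)) as E.
    simpl in E. rewrite !rone_l, rone_r in E. exact E. }
  split.
  - intro u. pose proof (Tmul _ _ _ _ (D rone u) R1c) as E.
    simpl in E. rewrite !rone_l, rone_r in E. exact (Tuniq _ _ _ (Shift u) E).
  - intros u w. pose proof (Tmul _ _ _ _ (Shift u) (D rone w)) as E.
    simpl in E. rewrite !rone_l, rone_r in E. exact (Tuniq _ _ _ E (Shift _)).
Qed.

Lemma rdiv_central (L : rloop) (c b a : L) :
  central c -> rdiv (rop c b) a = rop c (rdiv b a).
Proof.
  intros [_ Cassoc]. symmetry; apply rdiv_unique. rewrite Cassoc, rdivP. reflexivity.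
Qed.

Lemma inG_central_commute (L : rloop) (c : L) (g : L -> L) :
  central c -> inG L g -> forall x, g (rop c x) = rop c (g x).
Proof.
  intros Hc. induction 1 as [| y z | g h _ IHg _ IHh | g h _ IHg Hhg Hgh];
    intro x; auto.
  - unfold fmap. rewrite !(proj2 Hc), rdiv_central by exact Hc. reflexivity.
  - rewrite IHh, IHg. reflexivity.
  - rewrite <- (Hgh x) at 1. rewrite <- IHg, Hhg. reflexivity.
Qed.

Definition coords {L : rloop} (g : L -> L) : L -> L := fun a => rdiv (g a) a.

Lemma coords_inj (L : rloop) (g h : L -> L) : coords g = coords h -> g = h.
Proof.
  intro E. extensionality a.
  pose proof (f_equal (fun f => rop (f a) a) E) as E'. simpl in E'.
  unfold coords in E'. rewrite !rdivP in E'. exact E'.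
Qed.

Lemma coords_comp (L : rloop) (g h : L -> L) :
  inG L g -> (forall a, central (coords g a)) -> (forall a, central (coords h a)) ->
  coords (fun x => g (h x)) = (fun a => rop (coords g a) (coords h a)).
Proof.
  intros Hg Cg Ch. extensionality a. symmetry; apply rdiv_unique.
  unfold coords in *.
  rewrite (proj1 (Cg a)), (proj2 (Ch a)), rdivP.
  rewrite <- (inG_central_commute _ _ _ (Ch a) Hg), rdivP. reflexivity.
Qed.

(* Elements of ker theta only move points inside their zeta-class, so their
   coordinates lie in the center. *)
Lemma kernel_coords_center (S Q : rloop) (zeta : S -> S -> Prop) (nu : S -> Q)
    (theta : (S -> S) -> Q -> Q) :
  congruence zeta ->
  (forall x y, nu (rop x y) = rop (nu x) (nu y)) ->
  (forall x y, nu x = nu y <-> zeta x y) ->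
  induced_hom nu theta ->
  forall g, in_ker theta g -> forall a, center zeta (coords g a).
Proof.
  intros [Zrefl [_ [_ [_ Zdiv]]]] nu_mul nu_zeta Hth g [Hg Hker] a.
  assert (Moves : zeta a (g a)).
  { apply nu_zeta. rewrite (induced_hom_compat _ _ nu nu_mul _ Hth _ Hg), Hker.
    reflexivity. }
  unfold center, coords. rewrite <- (rdiv_self _ a).
  exact (Zdiv _ _ _ _ (Zrefl a) Moves).
Qed.

Theorem mainTheorem12 (S Q : rloop) (zeta : S -> S -> Prop) (nu : S -> Q) :
  is_center_congruence zeta ->
  (* nu : S -> Q = S/Z(S) is the natural projection *)
  (forall x y, nu (rop x y) = rop (nu x) (nu y)) ->
  (forall q : Q, exists x, nu x = q) ->
  (forall x y, nu x = nu y <-> zeta x y) ->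
  (* the induced surjective homomorphism theta exists ... *)
  (exists theta, induced_hom nu theta /\
     forall k, inG Q k -> exists g, inG S g /\ theta g = k) /\
  (* ... and its kernel embeds in a direct power of Z(S) *)
  (forall theta, induced_hom nu theta ->
     exists (A : Type) (phi : (S -> S) -> A -> S),
       (forall g, in_ker theta g -> forall a, center zeta (phi g a)) /\
       (forall g h, in_ker theta g -> in_ker theta h ->
          phi (fun x => g (h x)) = (fun a => rop (phi g a) (phi h a))) /\
       (forall g h, in_ker theta g -> in_ker theta h -> phi g = phi h -> g = h)).
Proof.
  intros Hzeta nu_mul nu_surj nu_zeta.
  destruct (constructive_indefinite_description _
     (choice (fun (q : Q) (x : S) => nu x = q) nu_surj)) as [sec sec_nu].
  split.
  - exists (transport _ _ nu sec). split.
    + exact (transport_hom _ _ nu nu_mul sec sec_nu).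
    + exact (transport_surj _ _ nu nu_mul sec sec_nu).
  - intros theta Hth.
    pose proof (kernel_coords_center _ _ _ _ _ (proj1 Hzeta) nu_mul nu_zeta Hth)
      as Hcen.
    exists S, coords. split; [exact Hcen | split].
    + intros g h Hg Hh. apply coords_comp; [exact (proj1 Hg) | |];
        intro a; eapply center_central; eauto.
    + intros g h _ _. apply coords_inj.
Qed.
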